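(* Let $m,n\ge1$ and $A,B\in\mathbb{R}_+^{m\times n}$. Then: (1) There exists $\mathbf{y}\in\mathbb{R}^n_+\setminus\{\mathbf{0}\}$ with $\hat\rho(A,B)=r(A,B,\mathbf{y})$, i.e. a weakly optimal vector exists. (2) There exists $\mathbf{y}\in\mathbb{R}^n_+\setminus\{\mathbf{0}\}$ with $\rho(A,B)=r(A,B,\mathbf{y})$ for which there is a sequence $\mathbf{y}_k>\mathbf{0}$, $k\in\mathbb{N}$, with $\lim_{k\to\infty}\mathbf{y}_k=\mathbf{y}$ and $\lim_{k\to\infty}r(A,B,\mathbf{y}_k)=\rho(A,B)$, i.e. an optimal vector exists.
   Context: $[m]=\{1,\dots,m\}$. For $A,B\in\mathbb{R}_+^{m\times n}$ (entrywise nonnegative real matrices) and $\mathbf{x}\in\mathbb{R}^n_+\setminus\{\mathbf{0}\}$, set $r(A,B,\mathbf{x})=\max_{i\in[m]}\frac{(A\mathbf{x})_i}{(B\mathbf{x})_i}\in[0,\infty]$ with the conventions $\frac00=0$ and $\frac c0=\infty$ for $c>0$; equivalently $r(A,B,\mathbf{x})=\inf\{t\ge 0: A\mathbf{x}\le tB\mathbf{x}\}$ (with $\inf\emptyset=\infty$). The Collatz–Wielandt quotient is $\rho(A,B)=\inf\{r(A,B,\mathbf{x}):\mathbf{x}>\mathbf{0}\}$ (infimum over vectors with all coordinates positive) and the weak Collatz–Wielandt quotient is $\hat\rho(A,B)=\inf\{r(A,B,\mathbf{x}):\mathbf{x}\in\mathbb{R}^n_+\setminus\{\mathbf{0}\}\}$.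 *)

From Stdlib Require Import Reals Lra.
Open Scope R_scope.

(* Extended nonnegative reals [0, oo]: finite values and infinity. *)
Inductive ER : Type := Fin (r : R) | Inf.

Definition ER_le (a b : ER) : Prop :=
  match a, b with
  | Fin x, Fin y => x <= y
  | _, Inf => True
  | Inf, Fin _ => False
  end.

Definition ER_max (a b : ER) : ER :=
  match a, b with
  | Fin x, Fin y => Fin (Rmax x y)
  | _, _ => Inf
  end.

Definition is_inf_ER (S : ER -> Prop) (v : ER) : Prop :=
  (forall w, S w -> ER_le v w) /\
  (forall u, (forall w, S w -> ER_le u w) -> ER_le u v).

Definition cv_ER (u : nat -> ER) (l : ER) : Prop :=
  match l with
  | Fin a => forall eps, eps > 0 -> exists N, forall k, (k >= N)%nat ->
               exists v, u k = Fin v /\ Rabs (v - a) < eps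
  | Inf => forall M, exists N, forall k, (k >= N)%nat -> ER_le (Fin M) (u k)
  end.

(* Matrices are functions nat -> nat -> R (entries (i,j) with i<m, j<n are
   used), vectors are functions nat -> R (coordinates j<n are used). *)
Fixpoint sumR (n : nat) (f : nat -> R) : R :=
  match n with O => 0 | S k => sumR k f + f k end.

Definition mulv (n : nat) (A : nat -> nat -> R) (x : nat -> R) (i : nat) : R :=
  sumR n (fun j => A i j * x j).

(* (Ax)_i / (Bx)_i with conventions 0/0 = 0, c/0 = oo for c > 0 *)
Definition quot (a b : R) : ER :=
  match Req_EM_T b 0 with
  | left _ => match Req_EM_T a 0 with left _ => Fin 0 | right _ => Inf end
  | right _ => Fin (a / b)
  end.

Fixpoint maxER (m : nat) (f : nat -> ER) : ER :=
  match m with O => Fin 0 | S k => ER_max (maxER k f) (f k) end.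

Definition rAB (m n : nat) (A B : nat -> nat -> R) (x : nat -> R) : ER :=
  maxER m (fun i => quot (mulv n A x i) (mulv n B x i)).

Definition nonneg_mat (m n : nat) (A : nat -> nat -> R) : Prop :=
  forall i j, (i < m)%nat -> (j < n)%nat -> 0 <= A i j.

Definition nonneg_nonzero (n : nat) (x : nat -> R) : Prop :=
  (forall j, (j < n)%nat -> 0 <= x j) /\ (exists j, (j < n)%nat /\ x j <> 0).

Definition positive_vec (n : nat) (x : nat -> R) : Prop :=
  forall j, (j < n)%nat -> 0 < x j.

Definition is_rho (m n : nat) (A B : nat -> nat -> R) (v : ER) : Prop :=
  is_inf_ER (fun w => exists x, positive_vec n x /\ w = rAB m n A B x) v.

Definition is_rho_hat (m n : nat) (A B : nat -> nat -> R) (v : ER) : Prop :=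
  is_inf_ER (fun w => exists x, nonneg_nonzero n x /\ w = rAB m n A B x) v.

From Stdlib Require Import Reals Lra Lia Classical ClassicalEpsilon.
Open Scope R_scope.

(* The sublevel sets {y >= 0 | Ay <= tBy} are closed cones, so normalizing a
   minimizing sequence and extracting a convergent subsequence gives a nonzero
   y with r(A,B,y) <= t; for t = hat rho this is a weakly optimal vector.
   For t = rho the limit may still have r(A,B,y) < rho.  Then y has a zero
   coordinate (positive vectors have r >= rho), and the same compactness
   argument applied to the minimizing sequence restricted to the zero
   coordinates of y gives a direction z supported there with Az <= rho Bz on
   the rows where By = 0.  On the other rows there is slack, so y + eps z is
   still in the sublevel set and has strictly larger support.  After at most n
   steps r(A,B,y) = rho, and y + d_k x_k, with x_k positive and minimizing and
   d_k small, is the required approximating sequence. *)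

Definition increasing_index (phi : nat -> nat) : Prop :=
  forall k, (phi k < phi (S k))%nat.

Lemma increasing_index_lt phi :
  increasing_index phi -> forall a b, (a < b)%nat -> (phi a < phi b)%nat.
Proof.
  intros Hphi a b Hab. induction Hab as [|b _ IH]; [apply Hphi|].
  specialize (Hphi b). lia.
Qed.

Lemma increasing_index_ge phi : increasing_index phi -> forall k, (k <= phi k)%nat.
Proof. intros Hphi k. induction k as [|k IH]; [lia|]. specialize (Hphi k). lia. Qed.

Lemma increasing_index_comp phi psi :
  increasing_index phi -> increasing_index psi -> increasing_index (fun k => phi (psi k)).
Proof. intros Hphi Hpsi k. apply increasing_index_lt; auto. Qed.

Lemma Un_cv_subseq u l phi :
  increasing_index phi -> Un_cv u l -> Un_cv (fun k => u (phi k)) l.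
Proof.
  intros Hphi Hu eps Heps. destruct (Hu eps Heps) as [N HN]. exists N.
  intros k Hk. apply HN. pose proof (increasing_index_ge phi Hphi k). lia.
Qed.

Lemma Un_cv_const_eq u c : (forall k, u k = c) -> Un_cv u c.
Proof.
  intros Hu eps Heps. exists O. intros k _. unfold Rdist.
  rewrite Hu, Rminus_diag, Rabs_R0. exact Heps.
Qed.

Lemma Un_cv_const c : Un_cv (fun _ => c) c.
Proof. apply Un_cv_const_eq. reflexivity. Qed.

Lemma inv_INR_S_pos k : 0 < / INR (S k).
Proof. apply Rinv_0_lt_compat, lt_0_INR. lia. Qed.

Lemma Un_cv_inv_INR_S : Un_cv (fun k => / INR (S k)) 0.
Proof.
  apply (cv_infty_cv_0 (fun k => INR (S k))).
  intro M. destruct (INR_unbounded M) as [N HN]. exists N. intros k Hk.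
  apply le_INR in Hk. rewrite S_INR. lra.
Qed.

Lemma Un_cv_inv_INR_S_bound u l :
  (forall k, Rabs (u k - l) <= / INR (S k)) -> Un_cv u l.
Proof.
  intros Hu eps Heps. destruct (Un_cv_inv_INR_S eps Heps) as [N HN]. exists N.
  intros k Hk. specialize (HN k Hk). specialize (Hu k). unfold Rdist in *.
  rewrite Rminus_0_r, Rabs_right in HN by (left; apply inv_INR_S_pos). lra.
Qed.

Lemma cv_ER_squeeze u t :
  (forall k, exists r, u k = Fin r /\ t <= r <= t + / INR (S k)) -> cv_ER u (Fin t).
Proof.
  intros Hu eps Heps. destruct (Un_cv_inv_INR_S eps Heps) as [N HN]. exists N.
  intros k Hk. specialize (HN k Hk). unfold Rdist in HN.
  destruct (Hu k) as [r [Hr Hrt]]. exists r. split; [exact Hr|].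
  rewrite Rminus_0_r, Rabs_right in HN by (left; apply inv_INR_S_pos).
  rewrite Rabs_right by lra. lra.
Qed.

Lemma inv_scaled_coord_bound r s c : 0 < r -> 0 < c <= s ->
  0 < / (r * (1 + s)) * c <= / r.
Proof.
  intros Hr Hc. rewrite Rinv_mult.
  assert (Hq : 0 < c / (1 + s) <= 1).
  { split; [apply Rdiv_lt_0_compat; lra|].
    apply (Rmult_le_reg_r (1 + s)); [lra|]. unfold Rdiv.
    rewrite Rmult_assoc, Rinv_l, Rmult_1_r by lra. lra. }
  pose proof (Rinv_0_lt_compat r Hr). unfold Rdiv in Hq.
  split; nra.
Qed.

Lemma Bolzano_Weierstrass_subseq (u : nat -> R) a b :
  (forall k, a <= u k <= b) ->
  exists phi l, increasing_index phi /\ Un_cv (fun k => u (phi k)) l.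
Proof.
  intros Hu.
  destruct (Bolzano_Weierstrass u (fun c => a <= c <= b) (compact_P3 a b) Hu) as [l Hl].
  assert (Hnear : forall q : nat * nat,
            exists p, (fst q <= p)%nat /\ Rabs (u p - l) <= / INR (S (snd q))).
  { intros [N k]. set (r := mkposreal _ (inv_INR_S_pos k)).
    destruct (Hl (disc l r) N) as [p [HNp Hp]].
    - exists r. intros y Hy. exact Hy.
    - exists p. split; [exact HNp|]. left. exact Hp. }
  destruct (choice _ Hnear) as [g Hg].
  set (phi := fix phi k := match k with O => g (O, O) | S k' => g (S (phi k'), S k') end).
  exists phi, l. split.
  - intro k. simpl. destruct (Hg (S (phi k), S k)) as [H _]. simpl in H. lia.
  - apply Un_cv_inv_INR_S_bound.
    intros [|k]; [apply (Hg (O, O))|apply (Hg (S (phi k), S k))].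
Qed.

Lemma Bolzano_Weierstrass_vec n (x : nat -> nat -> R) a b :
  (forall k j, (j < n)%nat -> a <= x k j <= b) ->
  exists phi z, increasing_index phi /\
    forall j, (j < n)%nat -> Un_cv (fun k => x (phi k) j) (z j).
Proof.
  induction n as [|n IH]; intros Hx.
  - exists (fun k => k), (fun _ => 0). split; [intro k; lia|intros; lia].
  - destruct IH as [phi [z [Hphi Hz]]]; [intros k j Hj; apply Hx; lia|].
    destruct (Bolzano_Weierstrass_subseq (fun k => x (phi k) n) a b) as [psi [l [Hpsi Hl]]].
    { intro k. apply Hx. lia. }
    exists (fun k => phi (psi k)), (fun j => if Nat.eqb j n then l else z j).
    split; [apply increasing_index_comp; assumption|].
    intros j Hj. destruct (Nat.eqb j n) eqn:E.
    + apply Nat.eqb_eq in E. subst j. exact Hl.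
    + apply Nat.eqb_neq in E.
      apply (Un_cv_subseq (fun k => x (phi k) j)); [exact Hpsi|]. apply Hz. lia.
Qed.

Lemma sumR_ext n f g : (forall j, (j < n)%nat -> f j = g j) -> sumR n f = sumR n g.
Proof. induction n as [|n IH]; simpl; intros H; [reflexivity|]. rewrite IH, H; auto. Qed.

Lemma sumR_nonneg n f : (forall j, (j < n)%nat -> 0 <= f j) -> 0 <= sumR n f.
Proof.
  induction n as [|n IH]; simpl; intros H; [lra|].
  pose proof (H n ltac:(lia)). pose proof (IH ltac:(auto)). lra.
Qed.

Lemma sumR_term_le n f j :
  (forall j, (j < n)%nat -> 0 <= f j) -> (j < n)%nat -> f j <= sumR n f.
Proof.
  induction n as [|n IH]; simpl; intros H Hj; [lia|].
  destruct (Nat.eq_dec j n) as [->|Hne].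
  - pose proof (sumR_nonneg n f ltac:(auto)). lra.
  - pose proof (IH ltac:(auto) ltac:(lia)). pose proof (H n ltac:(lia)). lra.
Qed.

Lemma sumR_eq0 n f : (forall j, (j < n)%nat -> 0 <= f j) -> sumR n f = 0 ->
  forall j, (j < n)%nat -> f j = 0.
Proof.
  intros H Hs j Hj. pose proof (sumR_term_le n f j H Hj). pose proof (H j Hj). lra.
Qed.

Lemma sumR_pos n f : (forall j, (j < n)%nat -> 0 <= f j) -> 0 < sumR n f ->
  exists j, (j < n)%nat /\ 0 < f j.
Proof.
  induction n as [|n IH]; simpl; intros H Hs; [lra|].
  destruct (Rlt_dec 0 (f n)) as [Hn|Hn]; [exists n; split; [lia|exact Hn]|].
  destruct IH as [j [Hj Hfj]]; [auto|pose proof (H n ltac:(lia)); lra|].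
  exists j. split; [lia|exact Hfj].
Qed.

Lemma sumR_scal n c f : sumR n (fun j => c * f j) = c * sumR n f.
Proof. induction n as [|n IH]; simpl; [ring|]. rewrite IH. ring. Qed.

Lemma sumR_plus n f g : sumR n (fun j => f j + g j) = sumR n f + sumR n g.
Proof. induction n as [|n IH]; simpl; [ring|]. rewrite IH. ring. Qed.

Lemma Un_cv_sumR n (f : nat -> nat -> R) g :
  (forall j, (j < n)%nat -> Un_cv (fun k => f k j) (g j)) ->
  Un_cv (fun k => sumR n (f k)) (sumR n g).
Proof.
  induction n as [|n IH]; simpl; intros H; [apply Un_cv_const|].
  apply CV_plus; [apply IH; auto|apply H; lia].
Qed.

Lemma mulv_nonneg m n A x i : nonneg_mat m n A -> (i < m)%nat ->
  (forall j, (j < n)%nat -> 0 <= x j) -> 0 <= mulv n A x i.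
Proof.
  intros HA Hi Hx. apply sumR_nonneg. intros j Hj. apply Rmult_le_pos; auto.
Qed.

Lemma mulv_scal n A x c i : mulv n A (fun j => c * x j) i = c * mulv n A x i.
Proof. unfold mulv. rewrite <- sumR_scal. apply sumR_ext. intros; ring. Qed.

Lemma mulv_add_scal n A y x c i :
  mulv n A (fun j => y j + c * x j) i = mulv n A y i + c * mulv n A x i.
Proof.
  unfold mulv. rewrite <- sumR_scal, <- sumR_plus. apply sumR_ext. intros; ring.
Qed.

Lemma Un_cv_mulv n A (x : nat -> nat -> R) z i :
  (forall j, (j < n)%nat -> Un_cv (fun k => x k j) (z j)) ->
  Un_cv (fun k => mulv n A (x k) i) (mulv n A z i).
Proof.
  intros H. apply (Un_cv_sumR n (fun k j => A i j * x k j)).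
  intros j Hj. apply CV_mult; [apply Un_cv_const|apply H, Hj].
Qed.

Definition mask_zeros (y x : nat -> R) (j : nat) : R :=
  if Req_EM_T (y j) 0 then x j else 0.

(* A row of a nonnegative matrix that annihilates [y >= 0] vanishes on the
   support of [y]. *)
Lemma mulv_mask_zeros m n A y x i : nonneg_mat m n A -> (i < m)%nat ->
  (forall j, (j < n)%nat -> 0 <= y j) -> mulv n A y i = 0 ->
  mulv n A (mask_zeros y x) i = mulv n A x i.
Proof.
  intros HA Hi Hy HAy.
  assert (Hterm : forall j, (j < n)%nat -> A i j * y j = 0).
  { apply sumR_eq0; [|exact HAy]. intros j Hj. apply Rmult_le_pos; auto. }
  apply sumR_ext. intros j Hj. unfold mask_zeros.
  destruct (Req_EM_T (y j) 0) as [E|E]; [reflexivity|].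
  destruct (Rmult_integral _ _ (Hterm j Hj)) as [Aij|]; [rewrite Aij; ring|contradiction].
Qed.

Lemma ER_le_Inf a : ER_le a Inf.
Proof. destruct a; exact I. Qed.

Lemma ER_le_trans a b c : ER_le a b -> ER_le b c -> ER_le a c.
Proof. destruct a, b, c; simpl; auto; intros; try lra; contradiction. Qed.

Lemma ER_le_antisym a b : ER_le a b -> ER_le b a -> a = b.
Proof. destruct a, b; simpl; intros; try contradiction; auto. f_equal. lra. Qed.

Lemma ER_not_le a b : ~ ER_le a b -> ER_le b a.
Proof. destruct a, b; simpl; auto; intros; lra. Qed.

Lemma ER_max_le_Fin a b s :
  ER_le (ER_max a b) (Fin s) <-> ER_le a (Fin s) /\ ER_le b (Fin s).
Proof.
  destruct a as [x|], b as [y|]; simpl; try tauto. split.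
  - intro H. split; eapply Rle_trans; [apply Rmax_l|exact H|apply Rmax_r|exact H].
  - intros [Hx Hy]. apply Rmax_lub; assumption.
Qed.

Lemma maxER_le_Fin m f s : 0 <= s ->
  ER_le (maxER m f) (Fin s) <-> forall i, (i < m)%nat -> ER_le (f i) (Fin s).
Proof.
  intros Hs. induction m as [|m IH]; simpl.
  - split; [intros _ i Hi; lia|intros _; exact Hs].
  - rewrite ER_max_le_Fin, IH. split.
    + intros [Hlow Hm] i Hi.
      destruct (Nat.eq_dec i m) as [->|Hne]; [exact Hm|apply Hlow; lia].
    + intros H. split; [intros i Hi|]; apply H; lia.
Qed.

Lemma maxER_ge0 m f : ER_le (Fin 0) (maxER m f).
Proof.
  induction m as [|m IH]; simpl; [lra|].
  destruct (maxER m f), (f m); simpl in *; auto. eapply Rle_trans; [exact IH|apply Rmax_l].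
Qed.

Lemma quot_le_Fin a b s : 0 <= a -> 0 <= b -> 0 <= s ->
  ER_le (quot a b) (Fin s) <-> a <= s * b.
Proof.
  intros Ha Hb Hs. unfold quot. destruct (Req_EM_T b 0) as [->|Hb0].
  - destruct (Req_EM_T a 0); simpl; split; intro; try contradiction; lra.
  - simpl. split; intro H.
    + apply (Rmult_le_compat_r b) in H; [|exact Hb]. unfold Rdiv in H.
      rewrite Rmult_assoc, Rinv_l, Rmult_1_r in H by exact Hb0. lra.
    + apply (Rmult_le_reg_r b); [lra|]. unfold Rdiv.
      rewrite Rmult_assoc, Rinv_l, Rmult_1_r by exact Hb0. exact H.
Qed.

Lemma is_inf_ER_exists (S : ER -> Prop) :
  (forall w, S w -> ER_le (Fin 0) w) -> exists v, is_inf_ER S v.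
Proof.
  intros H0. destruct (classic (exists x, S (Fin x))) as [[x0 Hx0]|Hnone].
  - set (E := fun y => S (Fin (- y))).
    assert (Hb : bound E). { exists 0. intros y Hy. apply H0 in Hy. simpl in Hy. lra. }
    assert (He : exists y, E y).
    { exists (- x0). unfold E. rewrite Ropp_involutive. exact Hx0. }
    destruct (completeness E Hb He) as [l [Hub Hlub]].
    exists (Fin (- l)). split.
    + intros [x|] Hw; simpl; [|exact I].
      assert (E (- x)) by (unfold E; rewrite Ropp_involutive; exact Hw).
      apply Hub in H. lra.
    + intros [a|] Hu; simpl.
      * assert (l <= - a); [|lra].
        apply Hlub. intros y Hy. apply Hu in Hy. simpl in Hy. lra.
      * exact (Hu _ Hx0).
  - exists Inf. split.
    + intros [x|] Hw; simpl; [apply Hnone; exists x; exact Hw|exact I].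
    + intros u _. apply ER_le_Inf.
Qed.

Lemma is_inf_ER_approx S t eps : is_inf_ER S (Fin t) -> 0 < eps ->
  exists w, S w /\ ER_le w (Fin (t + eps)).
Proof.
  intros [_ Hglb] Heps. apply NNPP. intro Hnone.
  assert (H : ER_le (Fin (t + eps)) (Fin t)).
  { apply Hglb. intros w Hw. apply ER_not_le. intro Hle. apply Hnone. exists w. auto. }
  simpl in H. lra.
Qed.

Lemma is_inf_ER_attained S v w : is_inf_ER S v -> S w -> ER_le w v -> is_inf_ER S w.
Proof.
  intros [Hlb Hglb] Hw Hle. split.
  - intros w' Hw'. apply ER_le_trans with v; auto.
  - intros u Hu. apply Hu, Hw.
Qed.

Lemma normalized_subseq_limit n (x : nat -> nat -> R) :
  (forall k j, (j < n)%nat -> 0 <= x k j) -> (forall k, 0 < sumR n (x k)) ->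
  exists phi z, increasing_index phi /\
    (forall j, (j < n)%nat -> 0 <= z j) /\ sumR n z = 1 /\
    forall j, (j < n)%nat -> Un_cv (fun k => / sumR n (x (phi k)) * x (phi k) j) (z j).
Proof.
  intros Hx Hs.
  set (u := fun k j => / sumR n (x k) * x k j).
  assert (Hu : forall k j, (j < n)%nat -> 0 <= u k j <= 1).
  { intros k j Hj. unfold u. specialize (Hs k). pose proof (Hx k j Hj).
    pose proof (sumR_term_le n (x k) j (Hx k) Hj). split.
    - apply Rmult_le_pos; [left; apply Rinv_0_lt_compat|]; assumption.
    - apply (Rmult_le_reg_l (sumR n (x k))); [exact Hs|].
      rewrite <- Rmult_assoc, Rinv_r, Rmult_1_l, Rmult_1_r by lra. assumption. }
  assert (Hu1 : forall k, sumR n (u k) = 1).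
  { intro k. unfold u. rewrite sumR_scal. specialize (Hs k). field. lra. }
  destruct (Bolzano_Weierstrass_vec n u 0 1 Hu) as [phi [z [Hphi Hz]]].
  exists phi, z. split; [exact Hphi|split; [|split; [|exact Hz]]].
  - intros j Hj. apply (@Rle_cv_lim (fun _ => 0) (fun k => u (phi k) j));
      [intro k; apply Hu, Hj|apply Un_cv_const|apply Hz, Hj].
  - apply (UL_sequence (fun k => sumR n (u (phi k)))).
    + exact (Un_cv_sumR n (fun k => u (phi k)) z Hz).
    + apply Un_cv_const_eq. intro k. apply Hu1.
Qed.

Lemma approximate_solutions_limit m n A B (rows : nat -> Prop) t (e : nat -> R)
    (x : nat -> nat -> R) :
  (forall k j, (j < n)%nat -> 0 <= x k j) -> (forall k, 0 < sumR n (x k)) ->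
  Un_cv e 0 ->
  (forall k i, (i < m)%nat -> rows i -> mulv n A (x k) i <= (t + e k) * mulv n B (x k) i) ->
  exists z, (forall j, (j < n)%nat -> 0 <= z j) /\ sumR n z = 1 /\
    (forall i, (i < m)%nat -> rows i -> mulv n A z i <= t * mulv n B z i) /\
    (forall j, (j < n)%nat -> (forall k, x k j = 0) -> z j = 0).
Proof.
  intros Hx Hs He Hxr.
  destruct (normalized_subseq_limit n x Hx Hs) as [phi [z [Hphi [Hz0 [Hz1 Hz]]]]].
  set (u := fun k j => / sumR n (x (phi k)) * x (phi k) j).
  exists z. split; [exact Hz0|split; [exact Hz1|split]].
  - intros i Hi Hrow.
    apply (@Rle_cv_lim (fun k => mulv n A (u k) i)
                      (fun k => (t + e (phi k)) * mulv n B (u k) i)).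
    + intro k. unfold u. rewrite !mulv_scal.
      pose proof (Rinv_0_lt_compat _ (Hs (phi k))) as Hinv.
      pose proof (Hxr (phi k) i Hi Hrow) as H.
      apply (Rmult_le_compat_l (/ sumR n (x (phi k)))) in H; [lra|lra].
    + apply Un_cv_mulv, Hz.
    + replace (t * mulv n B z i) with ((t + 0) * mulv n B z i) by ring.
      apply CV_mult; [apply CV_plus; [apply Un_cv_const|apply Un_cv_subseq; assumption]|].
      apply Un_cv_mulv, Hz.
  - intros j Hj Hzero. apply (UL_sequence (fun k => u k j)); [apply Hz, Hj|].
    apply Un_cv_const_eq. intro k. unfold u. rewrite Hzero. ring.
Qed.

Fixpoint supp_size (n : nat) (y : nat -> R) : nat :=
  match n with
  | O => O
  | S k => (supp_size k y + if Rlt_dec 0 (y k) then 1 else 0)%nat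
  end.

Lemma supp_size_le n y : (supp_size n y <= n)%nat.
Proof. induction n as [|n IH]; simpl; [lia|]. destruct (Rlt_dec 0 (y n)); lia. Qed.

Lemma supp_size_mono n y y' :
  (forall j, (j < n)%nat -> 0 < y j -> 0 < y' j) -> (supp_size n y <= supp_size n y')%nat.
Proof.
  induction n as [|n IH]; simpl; intros H; [lia|].
  pose proof (IH ltac:(auto)).
  destruct (Rlt_dec 0 (y n)) as [p|p], (Rlt_dec 0 (y' n)) as [q|q]; try lia.
  exfalso. apply q, H; [lia|exact p].
Qed.

Lemma supp_size_lt n y y' j1 : (forall j, (j < n)%nat -> 0 < y j -> 0 < y' j) ->
  (j1 < n)%nat -> 0 < y' j1 -> ~ 0 < y j1 -> (supp_size n y < supp_size n y')%nat.
Proof.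
  induction n as [|n IH]; simpl; intros H Hj1 H1 H2; [lia|].
  destruct (Nat.eq_dec j1 n) as [->|Hne].
  - pose proof (supp_size_mono n y y' ltac:(auto)).
    destruct (Rlt_dec 0 (y n)), (Rlt_dec 0 (y' n)); try contradiction; lia.
  - pose proof (IH ltac:(auto) ltac:(lia) H1 H2).
    destruct (Rlt_dec 0 (y n)) as [p|p], (Rlt_dec 0 (y' n)) as [q|q]; try lia.
    exfalso. apply q, H; [lia|exact p].
Qed.

(* When [q > 0] the slack [(t - a) q] absorbs [e (u - t v)]. *)
Lemma perturbation_slack p q u v a t :
  0 <= p -> 0 <= q -> p <= a * q -> a < t -> (q = 0 -> u <= t * v) ->
  exists eps, 0 < eps /\ forall e, 0 < e <= eps -> p + e * u <= t * (q + e * v).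
Proof.
  intros Hp Hq Hpq Hat Hzero. destruct (Req_EM_T q 0) as [->|Hq0].
  - exists 1. split; [lra|]. intros e He. specialize (Hzero eq_refl).
    assert (p = 0) as -> by nra. nra.
  - set (g := (t - a) * q). set (D := Rabs (u - t * v)).
    assert (Hg : 0 < g) by (unfold g; nra).
    assert (HD : 0 <= D) by apply Rabs_pos.
    exists (g / (1 + D)). split; [apply Rdiv_lt_0_compat; lra|].
    intros e [He0 He].
    assert (HeD : e * (1 + D) <= g).
    { apply (Rmult_le_compat_r (1 + D)) in He; [|lra]. unfold Rdiv in He.
      rewrite Rmult_assoc, Rinv_l, Rmult_1_r in He by lra. exact He. }
    assert (e * (u - t * v) <= e * D) by (apply Rmult_le_compat_l; [lra|apply Rle_abs]).
    unfold g in HeD. nra.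
Qed.

Lemma common_eps m (P : nat -> R -> Prop) :
  (forall i, (i < m)%nat -> exists eps, 0 < eps /\ forall e, 0 < e <= eps -> P i e) ->
  exists eps, 0 < eps /\ forall i, (i < m)%nat -> forall e, 0 < e <= eps -> P i e.
Proof.
  induction m as [|m IH]; intros H.
  - exists 1. split; [lra|]. intros; lia.
  - destruct IH as [e1 [He1 H1]]; [intros; apply H; lia|].
    destruct (H m ltac:(lia)) as [e2 [He2 H2]].
    exists (Rmin e1 e2). split; [apply Rmin_pos; assumption|].
    intros i Hi e He. pose proof (Rmin_l e1 e2). pose proof (Rmin_r e1 e2).
    destruct (Nat.eq_dec i m) as [->|Hne]; [apply H2; lra|apply H1; [lia|lra]].
Qed.

Section CollatzWielandt.
Variables (m n : nat) (A B : nat -> nat -> R).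
Hypotheses (HA : nonneg_mat m n A) (HB : nonneg_mat m n B).
Hypothesis Hn : (1 <= n)%nat.

Lemma rAB_ge0 x : ER_le (Fin 0) (rAB m n A B x).
Proof. apply maxER_ge0. Qed.

Lemma rAB_le_Fin x s : (forall j, (j < n)%nat -> 0 <= x j) -> 0 <= s ->
  ER_le (rAB m n A B x) (Fin s) <->
  forall i, (i < m)%nat -> mulv n A x i <= s * mulv n B x i.
Proof.
  intros Hx Hs. unfold rAB. rewrite maxER_le_Fin by exact Hs.
  split; intros H i Hi; specialize (H i Hi);
    pose proof (mulv_nonneg m n A x i HA Hi Hx); pose proof (mulv_nonneg m n B x i HB Hi Hx);
    [apply quot_le_Fin in H|apply quot_le_Fin]; assumption.
Qed.

Definition sublevel (t : R) (y : nat -> R) : Prop :=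
  (forall j, (j < n)%nat -> 0 <= y j) /\
  forall i, (i < m)%nat -> mulv n A y i <= t * mulv n B y i.

Lemma sublevel_perturb t a y z :
  (forall j, (j < n)%nat -> 0 <= y j) -> (forall j, (j < n)%nat -> 0 <= z j) -> a < t ->
  (forall i, (i < m)%nat -> mulv n A y i <= a * mulv n B y i) ->
  (forall i, (i < m)%nat -> mulv n B y i = 0 -> mulv n A z i <= t * mulv n B z i) ->
  exists eps, 0 < eps /\ sublevel t (fun j => y j + eps * z j).
Proof.
  intros Hy Hz Hat Hya Hzrows.
  destruct (common_eps m (fun i e => mulv n A (fun j => y j + e * z j) i <=
                                     t * mulv n B (fun j => y j + e * z j) i))
    as [eps [Heps Hall]].
  - intros i Hi.
    destruct (perturbation_slack (mulv n A y i) (mulv n B y i) (mulv n A z i) (mulv n B z i) a t)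
      as [eps [Heps H]];
      [apply (mulv_nonneg m); auto|apply (mulv_nonneg m); auto|auto|exact Hat|auto|].
    exists eps. split; [exact Heps|]. intros e He. rewrite !mulv_add_scal. apply H, He.
  - exists eps. split; [exact Heps|split].
    + intros j Hj. pose proof (Hy j Hj). pose proof (Hz j Hj). nra.
    + intros i Hi. apply Hall; [exact Hi|lra].
Qed.

Definition rAB_image (P : (nat -> R) -> Prop) (w : ER) : Prop :=
  exists x, P x /\ w = rAB m n A B x.

Lemma rAB_image_inf_exists P : exists v, is_inf_ER (rAB_image P) v.
Proof. apply is_inf_ER_exists. intros w [x [_ ->]]. apply rAB_ge0. Qed.

Lemma rAB_image_inf_le P v x : is_inf_ER (rAB_image P) v -> P x -> ER_le v (rAB m n A B x).
Proof. intros [Hlb _] Hx. apply Hlb. exists x. auto. Qed.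

Lemma rAB_image_inf_ge0 P t : is_inf_ER (rAB_image P) (Fin t) -> 0 <= t.
Proof. intros [_ Hglb]. apply (Hglb (Fin 0)). intros w [x [_ ->]]. apply rAB_ge0. Qed.

Lemma minimizing_sequence P t : (forall x, P x -> forall j, (j < n)%nat -> 0 <= x j) ->
  is_inf_ER (rAB_image P) (Fin t) ->
  exists x : nat -> nat -> R, forall k, P (x k) /\
    forall i, (i < m)%nat -> mulv n A (x k) i <= (t + / INR (S k)) * mulv n B (x k) i.
Proof.
  intros HP Hinf. pose proof (rAB_image_inf_ge0 P t Hinf) as Ht.
  apply (choice (fun k x => P x /\ forall i, (i < m)%nat ->
                   mulv n A x i <= (t + / INR (S k)) * mulv n B x i)).
  intro k. pose proof (inv_INR_S_pos k) as Hk.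
  destruct (is_inf_ER_approx _ t _ Hinf Hk) as [w [[x [Hx ->]] Hw]].
  exists x. split; [exact Hx|]. apply rAB_le_Fin; auto. lra.
Qed.

Lemma positive_vec_nonneg x : positive_vec n x -> forall j, (j < n)%nat -> 0 <= x j.
Proof. intros Hx j Hj. left. apply Hx, Hj. Qed.

Lemma ones_positive : positive_vec n (fun _ => 1).
Proof. intros j _. lra. Qed.

Lemma ones_nonneg_nonzero : nonneg_nonzero n (fun _ => 1).
Proof. split; [intros; lra|exists O; split; [lia|lra]]. Qed.

Lemma nonneg_nonzero_of_pos y j : (forall j, (j < n)%nat -> 0 <= y j) ->
  (j < n)%nat -> 0 < y j -> nonneg_nonzero n y.
Proof. intros Hy Hj Hyj. split; [exact Hy|exists j; split; [exact Hj|lra]]. Qed.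

Lemma nonneg_nonzero_sum_pos y : nonneg_nonzero n y -> 0 < sumR n y.
Proof.
  intros [Hy [j [Hj Hyj]]]. apply Rlt_le_trans with (y j);
    [pose proof (Hy j Hj); lra|apply sumR_term_le; assumption].
Qed.

Section Minimizing.
Variables (t : R) (x : nat -> nat -> R).
Hypothesis Ht : 0 <= t.
Hypothesis Hx : forall k, positive_vec n (x k).
Hypothesis Hxr : forall k i, (i < m)%nat ->
  mulv n A (x k) i <= (t + / INR (S k)) * mulv n B (x k) i.
Hypothesis Hlow : forall y, positive_vec n y -> ER_le (Fin t) (rAB m n A B y).

Lemma direction_on_zeros y : sublevel t y -> (exists j0, (j0 < n)%nat /\ y j0 = 0) ->
  exists z, (forall j, (j < n)%nat -> 0 <= z j) /\ sumR n z = 1 /\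
    (forall j, (j < n)%nat -> y j <> 0 -> z j = 0) /\
    (forall i, (i < m)%nat -> mulv n B y i = 0 -> mulv n A z i <= t * mulv n B z i).
Proof.
  intros [Hy0 Hy] [j0 [Hj0 Hyj0]].
  assert (Hmask : forall k j, (j < n)%nat -> 0 <= mask_zeros y (x k) j).
  { intros k j Hj. unfold mask_zeros.
    destruct (Req_EM_T (y j) 0); [apply positive_vec_nonneg; auto|lra]. }
  destruct (approximate_solutions_limit m n A B (fun i => mulv n B y i = 0) t
              (fun k => / INR (S k)) (fun k => mask_zeros y (x k)))
    as [z [Hz0 [Hz1 [Hzrows Hzsupp]]]].
  - exact Hmask.
  - intro k. apply Rlt_le_trans with (mask_zeros y (x k) j0).
    + unfold mask_zeros. destruct (Req_EM_T (y j0) 0); [apply Hx, Hj0|contradiction].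
    + apply sumR_term_le; auto.
  - exact Un_cv_inv_INR_S.
  - intros k i Hi HBy.
    assert (HAy : mulv n A y i = 0).
    { pose proof (Hy i Hi). pose proof (mulv_nonneg m n A y i HA Hi Hy0).
      rewrite HBy in *. lra. }
    rewrite (mulv_mask_zeros m n A y (x k) i HA Hi Hy0 HAy).
    rewrite (mulv_mask_zeros m n B y (x k) i HB Hi Hy0 HBy).
    apply Hxr, Hi.
  - exists z. split; [exact Hz0|split; [exact Hz1|split; [|exact Hzrows]]].
    intros j Hj Hyj. apply Hzsupp; [exact Hj|]. intro k. unfold mask_zeros.
    destruct (Req_EM_T (y j) 0); [contradiction|reflexivity].
Qed.

Lemma support_growth y : sublevel t y -> ~ ER_le (Fin t) (rAB m n A B y) ->
  exists y', sublevel t y' /\ (forall j, (j < n)%nat -> 0 < y j -> 0 < y' j) /\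
    (supp_size n y < supp_size n y')%nat.
Proof.
  intros Hy Hlt. pose proof Hy as [Hy0 _].
  pose proof (rAB_ge0 y) as Ha.
  destruct (rAB m n A B y) as [a|] eqn:Er; [|contradiction (Hlt I)].
  simpl in Hlt, Ha.
  assert (Hya : forall i, (i < m)%nat -> mulv n A y i <= a * mulv n B y i).
  { apply (rAB_le_Fin y a Hy0 Ha). rewrite Er. simpl. lra. }
  assert (Hzero : exists j0, (j0 < n)%nat /\ y j0 = 0).
  { apply NNPP. intro Hpos. apply Hlt.
    assert (Hypos : positive_vec n y).
    { intros j Hj. destruct (Rle_lt_or_eq_dec 0 (y j) (Hy0 j Hj)) as [Hp|Heq]; [exact Hp|].
      exfalso. apply Hpos. exists j. auto. }
    pose proof (Hlow y Hypos) as H. rewrite Er in H. exact H. }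
  destruct (direction_on_zeros y Hy Hzero) as [z [Hz0 [Hz1 [Hzsupp Hzrows]]]].
  destruct (sublevel_perturb t a y z Hy0 Hz0 ltac:(lra) Hya Hzrows) as [eps [Heps Hy']].
  destruct (sumR_pos n z Hz0 ltac:(lra)) as [j1 [Hj1 Hzj1]].
  assert (Hyj1 : y j1 = 0).
  { destruct (Req_EM_T (y j1) 0) as [E|E]; [exact E|].
    specialize (Hzsupp j1 Hj1 E). lra. }
  assert (Hgrow : forall j, (j < n)%nat -> 0 < y j -> 0 < y j + eps * z j).
  { intros j Hj Hp. pose proof (Hz0 j Hj). nra. }
  exists (fun j => y j + eps * z j). split; [exact Hy'|split; [exact Hgrow|]].
  apply (supp_size_lt n y _ j1); [exact Hgrow|exact Hj1|rewrite Hyj1; nra|rewrite Hyj1; lra].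
Qed.

Lemma sublevel_attaining : forall y, sublevel t y -> (exists j, (j < n)%nat /\ 0 < y j) ->
  exists y', sublevel t y' /\ (exists j, (j < n)%nat /\ 0 < y' j) /\
    ER_le (Fin t) (rAB m n A B y').
Proof.
  assert (Hind : forall d y, (n - supp_size n y <= d)%nat -> sublevel t y ->
            (exists j, (j < n)%nat /\ 0 < y j) ->
            exists y', sublevel t y' /\ (exists j, (j < n)%nat /\ 0 < y' j) /\
              ER_le (Fin t) (rAB m n A B y')).
  { induction d as [|d IH]; intros y Hd Hy [j [Hj Hyj]];
      (destruct (classic (ER_le (Fin t) (rAB m n A B y))) as [Hle|Hlt];
       [exists y; split; [exact Hy|split; [exists j; auto|exact Hle]]|]);
      destruct (support_growth y Hy Hlt) as [y' [Hy' [Hsupp Hsize]]];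
      pose proof (supp_size_le n y').
    - lia.
    - apply (IH y'); [lia|exact Hy'|exists j; auto]. }
  intros y Hy Hpos. apply (Hind (n - supp_size n y)%nat y); auto.
Qed.

Lemma approximating_sequence y : sublevel t y ->
  exists yk : nat -> nat -> R, (forall k, positive_vec n (yk k)) /\
    (forall j, (j < n)%nat -> Un_cv (fun k => yk k j) (y j)) /\
    cv_ER (fun k => rAB m n A B (yk k)) (Fin t).
Proof.
  intros [Hy0 Hy].
  set (d := fun k => / (INR (S k) * (1 + sumR n (x k)))).
  assert (Hd : forall k j, (j < n)%nat -> 0 < d k * x k j <= / INR (S k)).
  { intros k j Hj. apply inv_scaled_coord_bound; [apply lt_0_INR; lia|split].
    - apply Hx, Hj.
    - apply sumR_term_le; [apply positive_vec_nonneg, Hx|exact Hj]. }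
  assert (Hdpos : forall k, 0 < d k).
  { intro k. pose proof (Hd k O ltac:(lia)). pose proof (Hx k O ltac:(lia)). nra. }
  assert (Hpos : forall k, positive_vec n (fun j => y j + d k * x k j)).
  { intros k j Hj. pose proof (Hy0 j Hj). pose proof (Hd k j Hj). lra. }
  exists (fun k j => y j + d k * x k j). split; [exact Hpos|split].
  - intros j Hj. apply Un_cv_inv_INR_S_bound. intro k.
    replace (y j + d k * x k j - y j) with (d k * x k j) by ring.
    pose proof (Hd k j Hj). rewrite Rabs_right by lra. lra.
  - apply cv_ER_squeeze. intro k. pose proof (inv_INR_S_pos k).
    assert (Hup : ER_le (rAB m n A B (fun j => y j + d k * x k j)) (Fin (t + / INR (S k)))).
    { apply rAB_le_Fin; [apply positive_vec_nonneg, Hpos|lra|].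
      intros i Hi. rewrite !mulv_add_scal.
      pose proof (Hy i Hi). pose proof (Hxr k i Hi). pose proof (Hdpos k).
      pose proof (mulv_nonneg m n B y i HB Hi Hy0).
      pose proof (mulv_nonneg m n B (x k) i HB Hi (positive_vec_nonneg _ (Hx k))).
      nra. }
    pose proof (Hlow _ (Hpos k)) as Hdown.
    destruct (rAB m n A B (fun j => y j + d k * x k j)) as [r|]; simpl in *; [|contradiction].
    exists r. auto.
Qed.

Lemma optimal_vector_exists : exists y, nonneg_nonzero n y /\ rAB m n A B y = Fin t /\
  exists yk : nat -> nat -> R, (forall k, positive_vec n (yk k)) /\
    (forall j, (j < n)%nat -> Un_cv (fun k => yk k j) (y j)) /\
    cv_ER (fun k => rAB m n A B (yk k)) (Fin t).
Proof.
  destruct (approximate_solutions_limit m n A B (fun _ => True) t (fun k => / INR (S k)) x)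
    as [z [Hz0 [Hz1 [Hzrows _]]]].
  - intro k. apply positive_vec_nonneg, Hx.
  - intro k. apply nonneg_nonzero_sum_pos, (nonneg_nonzero_of_pos _ O);
      [apply positive_vec_nonneg, Hx|lia|apply Hx; lia].
  - exact Un_cv_inv_INR_S.
  - intros k i Hi _. apply Hxr, Hi.
  - destruct (sumR_pos n z Hz0 ltac:(lra)) as [j [Hj Hzj]].
    destruct (sublevel_attaining z (conj Hz0 (fun i Hi => Hzrows i Hi I)))
      as [y [Hy [[j' [Hj' Hyj']] Hty]]]; [exists j; auto|].
    exists y. split; [|split].
    + apply (nonneg_nonzero_of_pos y j'); [apply Hy|exact Hj'|exact Hyj'].
    + apply ER_le_antisym; [|exact Hty]. apply rAB_le_Fin; [apply Hy|exact Ht|apply Hy].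
    + apply approximating_sequence, Hy.
Qed.

End Minimizing.

Lemma weakly_optimal_exists :
  exists y, nonneg_nonzero n y /\ is_rho_hat m n A B (rAB m n A B y).
Proof.
  destruct (rAB_image_inf_exists (nonneg_nonzero n)) as [[t|] Hinf].
  - pose proof (rAB_image_inf_ge0 _ t Hinf) as Ht.
    destruct (minimizing_sequence (nonneg_nonzero n) t (fun x Hx => proj1 Hx) Hinf) as [x Hx].
    destruct (approximate_solutions_limit m n A B (fun _ => True) t (fun k => / INR (S k)) x)
      as [z [Hz0 [Hz1 [Hzrows _]]]].
    + intro k. apply (Hx k).
    + intro k. apply nonneg_nonzero_sum_pos, Hx.
    + exact Un_cv_inv_INR_S.
    + intros k i Hi _. apply Hx, Hi.
    + destruct (sumR_pos n z Hz0 ltac:(lra)) as [j [Hj Hzj]].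
      pose proof (nonneg_nonzero_of_pos z j Hz0 Hj Hzj) as Hz.
      exists z. split; [exact Hz|].
      apply (is_inf_ER_attained _ (Fin t)); [exact Hinf|exists z; auto|].
      apply rAB_le_Fin; auto.
  - exists (fun _ => 1). split; [exact ones_nonneg_nonzero|].
    apply (is_inf_ER_attained _ Inf); [exact Hinf| |apply ER_le_Inf].
    exists (fun _ => 1). split; [exact ones_nonneg_nonzero|reflexivity].
Qed.

Lemma optimal_exists :
  exists y, nonneg_nonzero n y /\ is_rho m n A B (rAB m n A B y) /\
    exists yk : nat -> nat -> R,
      (forall k, positive_vec n (yk k)) /\
      (forall j, (j < n)%nat -> Un_cv (fun k => yk k j) (y j)) /\
      cv_ER (fun k => rAB m n A B (yk k)) (rAB m n A B y).
Proof.
  destruct (rAB_image_inf_exists (positive_vec n)) as [[t|] Hinf].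
  - destruct (minimizing_sequence (positive_vec n) t positive_vec_nonneg Hinf) as [x Hx].
    destruct (optimal_vector_exists t x (rAB_image_inf_ge0 _ t Hinf)
                (fun k => proj1 (Hx k)) (fun k => proj2 (Hx k))
                (fun y => rAB_image_inf_le _ _ y Hinf))
      as [y [Hy [Ery Hyk]]].
    exists y. rewrite Ery. auto.
  - assert (Hones : rAB m n A B (fun _ => 1) = Inf).
    { pose proof (rAB_image_inf_le _ _ _ Hinf ones_positive) as H.
      destruct (rAB m n A B (fun _ => 1)); [contradiction|reflexivity]. }
    exists (fun _ => 1). rewrite Hones.
    split; [exact ones_nonneg_nonzero|split; [exact Hinf|]].
    exists (fun _ _ => 1). split; [intros; exact ones_positive|split].
    + intros j _. apply Un_cv_const.
    + rewrite Hones. intros M. exists O. intros. exact I.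
Qed.

End CollatzWielandt.

Theorem lemma2p4 (m n : nat) (A B : nat -> nat -> R) :
  (1 <= m)%nat -> (1 <= n)%nat ->
  nonneg_mat m n A -> nonneg_mat m n B ->
  (exists y, nonneg_nonzero n y /\ is_rho_hat m n A B (rAB m n A B y)) /\
  (exists y, nonneg_nonzero n y /\ is_rho m n A B (rAB m n A B y) /\
     exists yk : nat -> nat -> R,
       (forall k, positive_vec n (yk k)) /\
       (forall j, (j < n)%nat -> Un_cv (fun k => yk k j) (y j)) /\
       cv_ER (fun k => rAB m n A B (yk k)) (rAB m n A B y)).
Proof.
  intros _ Hn HA HB. split.
  - exact (weakly_optimal_exists m n A B HA HB Hn).
  - exact (optimal_exists m n A B HA HB Hn).
Qed.
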